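(* For every $n$-qubit pure state $\ket{\psi}$, $\mathcal{B}(\ket{\psi})\le\frac n4$, with equality for every $1$-uniform state. Moreover, every $2$-uniform $n$-qubit state $\ket{\phi}$ satisfies $\mathcal{B}(\ket{\phi})=\frac n4$ and $\mathrm{Var}_{\phi}\le\mathrm{Var}_{\psi}$ for every $n$-qubit pure state $\ket{\psi}$ with $\mathcal{B}(\ket{\psi})=\frac n4$.
   Context: Parallelized controlled-SWAP test: with $\mathbb{F}^{(i)}$ the swap of the $i$-th qubits of two copies of $\ket{\psi}$, the probability of outcome $\mathbf{z}\in\{0,1\}^n$ is $p_\psi(\mathbf{z})=\mathrm{Tr}\big[\big(\bigotimes_{i=1}^n\tfrac12(\mathbb{1}+(-1)^{z_i}\mathbb{F}^{(i)})\big)(\ket{\psi}\!\bra{\psi})^{\otimes 2}\big]$; each outcome $1$ heralds a Bell pair. The expected number of Bell pairs is $\mathcal{B}(\ket{\psi})=\sum_{\mathbf{z}}w(\mathbf{z})p_\psi(\mathbf{z})$ with $w$ the Hamming weight, and its variance is $\mathrm{Var}_\psi=\sum_{\mathbf{z}}w(\mathbf{z})^2p_\psi(\mathbf{z})-\mathcal{B}(\ket{\psi})^2$. A state is $k$-uniform if all its reduced density matrices on $k$ or fewer qubits are maximally mixed. *)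

(* Amplitudes live in an arbitrary numClosedFieldType C
   (this includes the complex numbers, e.g. R[i] for R : rcfType / realType). *)
From HB Require Import structures.
From mathcomp Require Import all_boot all_order all_algebra.
Set Implicit Arguments. Unset Strict Implicit. Unset Printing Implicit Defensive.
Import Order.TTheory GRing.Theory Num.Theory.
Local Open Scope ring_scope.

Section QubitDefs.
Variable C : numClosedFieldType.

(* computational basis of n qubits: bit strings z : 'I_n -> bool *)
Definition qubits (n : nat) := {ffun 'I_n -> bool}.

Definition ket (n : nat) := qubits n -> C.

Definition is_state n (psi : ket n) : Prop :=
  \sum_(x : qubits n) `|psi x| ^+ 2 = 1.

Definition op (T : finType) := T -> T -> C.
Definition idop (T : finType) : op T := fun a b => (a == b)%:R.
Definition mulop (T : finType) (A B : op T) : op T :=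
  fun a c => \sum_(b : T) A a b * B b c.
Definition trop (T : finType) (A : op T) : C := \sum_(a : T) A a a.

Definition two_copies n := (qubits n * qubits n)%type.

Definition swap_at n (i : 'I_n) (a : two_copies n) : two_copies n :=
  ([ffun j => if j == i then a.2 j else a.1 j],
   [ffun j => if j == i then a.1 j else a.2 j]).

Definition Fswap n (i : 'I_n) : op (two_copies n) :=
  fun a b => (a == swap_at i b)%:R.

Definition proj_i n (i : 'I_n) (zi : bool) : op (two_copies n) :=
  fun a b => (idop a b + (-1) ^+ zi * Fswap i a b) / 2.

(* tensor product over i of the projectors acting on the i-th qubit pairs:
   the product of their (commuting) embeddings *)
Definition Pz n (z : qubits n) : op (two_copies n) :=
  foldr (fun i A => mulop (proj_i i (z i)) A) (@idop _) (enum 'I_n).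

(* (|psi><psi|)^{\otimes 2} *)
Definition rho2 n (psi : ket n) : op (two_copies n) :=
  fun a b => (psi a.1 * psi a.2) * Num.conj (psi b.1 * psi b.2).

(* outcome probability of the parallelized controlled-SWAP test *)
Definition p_out n (psi : ket n) (z : qubits n) : C :=
  trop (mulop (Pz z) (rho2 psi)).

Definition hweight n (z : qubits n) : nat := #|[pred i | z i]|.

Definition Bell_exp n (psi : ket n) : C :=
  \sum_(z : qubits n) (hweight z)%:R * p_out psi z.

Definition Bell_var n (psi : ket n) : C :=
  \sum_(z : qubits n) ((hweight z)%:R ^+ 2) * p_out psi z - Bell_exp psi ^+ 2.

Definition glue n (A : {set 'I_n})
  (a : {ffun {i : 'I_n | i \in A} -> bool})
  (e : {ffun {i : 'I_n | i \notin A} -> bool}) : qubits n :=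
  [ffun j => match insub j : option {i : 'I_n | i \in A} with
             | Some j' => a j'
             | None => match insub j : option {i : 'I_n | i \notin A} with
                       | Some j'' => e j''
                       | None => false
                       end
             end].

Definition rdm n (psi : ket n) (A : {set 'I_n})
  (a a' : {ffun {i : 'I_n | i \in A} -> bool}) : C :=
  \sum_(e : {ffun {i : 'I_n | i \notin A} -> bool})
     psi (glue a e) * Num.conj (psi (glue a' e)).

Arguments glue {n} A a e.
Arguments rdm {n} psi A a a'.

Definition k_uniform n (psi : ket n) (k : nat) : Prop :=
  forall A : {set 'I_n}, (#|A| <= k)%N ->
  forall a a' : {ffun {i : 'I_n | i \in A} -> bool},
    rdm psi A a a' = (a == a')%:R / 2 ^+ #|A|.

End QubitDefs.

(* Reading z as n random bits, the controlled-SWAP test gives z_i = 1 with the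
   weight of (1 - F^(i))/2, and these projectors commute.  Hence the first and
   second moments of z are traces against rho (x) rho of products of the
   (1 - F^(i))/2, which expand into swap-test values tr (F_S rho (x) rho), i.e.
   purities tr (rho_S ^ 2) of the reduced states on |S| <= 2 qubits:
     E[z_i] = (1 - tr rho_i^2) / 2,
     E[z_i z_j] = (1 - tr rho_i^2 - tr rho_j^2 + tr rho_ij^2) / 4   (i <> j).
   A purity on S is at least 2^-|S| (Cauchy-Schwarz on the diagonal of rho_S),
   with equality for maximally mixed marginals.  So E[z_i] <= 1/4, with
   equality for 1-uniform states; and if the mean n/4 is attained, all
   single-qubit marginals are maximally mixed and E[z_i z_j] >= 1/16, with
   equality for 2-uniform states, which thus minimise the second moment. *)

From mathcomp Require Import all_boot all_order all_algebra.
From mathcomp Require Import ring.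
Set Implicit Arguments. Unset Strict Implicit. Unset Printing Implicit Defensive.
Import Order.TTheory GRing.Theory Num.Theory.
Local Open Scope ring_scope.

Lemma sum_eq_natrM (R : pzSemiRingType) (T : finType) (x : T) (F : T -> R) :
  \sum_y (x == y)%:R * F y = F x.
Proof.
rewrite (bigD1 x) //= eqxx mul1r big1 ?addr0 // => y /negbTE.
by rewrite eq_sym => ->; rewrite mul0r.
Qed.

Lemma sum_sqr_ge_inv_card (R : numFieldType) (T : finType) (u : T -> R) :
  (forall x, u x \is Num.real) -> \sum_x u x = 1 -> #|T|%:R^-1 <= \sum_x u x ^+ 2.
Proof.
move=> u_real sum_u.
case: (pickP (@predT T)) => [x _ | T0]; last first.
  by move: sum_u; rewrite big_pred0 // => /eqP; rewrite eq_sym oner_eq0.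
set c := #|T|%:R^-1.
have Tc : #|T|%:R * c = 1 by rewrite mulfV // pnatr_eq0 -lt0n; apply/card_gt0P; exists x.
have : 0 <= \sum_y (u y - c) ^+ 2.
  apply: sumr_ge0 => y _; rewrite -real_normK ?exprn_ge0 //.
  by rewrite realB ?realV ?realn.
rewrite (eq_bigr (fun y => u y ^+ 2 - 2 * c * u y + c ^+ 2)); last by move=> y _; ring.
have sum_c2 : \sum_(y : T) c ^+ 2 = c by rewrite sumr_const -mulr_natl expr2 mulrA Tc mul1r.
rewrite !big_split /= sumrN -mulr_sumr sum_u sum_c2 -subr_ge0.
by congr (0 <= _); ring.
Qed.

Section TwoCopies.
Variables (C : numClosedFieldType) (n : nat).
Implicit Types (a b c : two_copies n) (S Q : {set 'I_n}) (psi : ket C n).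

(* Entries of 1, F and (1 + (-1)^s F)/2 on the pair formed by the k-th qubits of
   the two copies; all operators below are products of such factors over k. *)
Definition qpair a (k : 'I_n) : bool * bool := (a.1 k, a.2 k).
Definition id_qp (x y : bool * bool) : C := (x == y)%:R.
Definition swap_qp (x y : bool * bool) : C := (x == (y.2, y.1))%:R.
Definition proj_qp (s : bool) (x y : bool * bool) : C :=
  (id_qp x y + (-1) ^+ s * swap_qp x y) / 2.

Lemma prod_id_qp a c : \prod_k id_qp (qpair a k) (qpair c k) = (a == c)%:R.
Proof.
have [<-|neq_ac] := eqVneq a c; first by apply: big1 => k _; rewrite /id_qp eqxx.
have [/existsP[k neq_k] | /existsPn eq_all] := boolP [exists k, qpair a k != qpair c k].
  by rewrite (bigD1 k) //= /id_qp (negbTE neq_k) mul0r.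
case/eqP: neq_ac; case: a c eq_all => [a1 a2] [c1 c2] eq_all.
by congr pair; apply/ffunP => k; have /negPn/eqP[] := eq_all k.
Qed.

Lemma swap_atK (i : 'I_n) : involutive (@swap_at n i).
Proof.
by move=> [a1 a2]; congr pair; apply/ffunP => j; rewrite !ffunE; case: eqP.
Qed.

Lemma qpair_swap_at (i k : 'I_n) a :
  qpair (swap_at i a) k = if k == i then (a.2 i, a.1 i) else qpair a k.
Proof. by rewrite /qpair !ffunE; case: eqP => [->|]. Qed.

Lemma mulop_proj_i (i : 'I_n) (s : bool) (A : op C (two_copies n)) a c :
  mulop (proj_i C i s) A a c = (A a c + (-1) ^+ s * A (swap_at i a) c) / 2.
Proof.
rewrite /mulop (eq_bigr (fun b => ((a == b)%:R * A b c) / 2 +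
    ((-1) ^+ s / 2) * ((swap_at i a == b)%:R * A b c))); last first.
  move=> b _; rewrite /proj_i /Fswap /idop.
  have -> : (a == swap_at i b) = (swap_at i a == b).
    by apply/eqP/eqP => [->|<-]; rewrite swap_atK.
  ring.
by rewrite big_split /= -mulr_suml -mulr_sumr !sum_eq_natrM; ring.
Qed.

Lemma foldr_proj_i_entry (z : qubits n) (s : seq 'I_n) a c : uniq s ->
  foldr (fun i A => mulop (proj_i C i (z i)) A) (@idop C _) s a c =
  (\prod_(k | k \notin s) id_qp (qpair a k) (qpair c k)) *
    \prod_(k <- s) proj_qp (z k) (qpair a k) (qpair c k).
Proof.
elim: s a => [|i s IH] a; first by rewrite big_nil mulr1 /= (eq_bigl predT) // prod_id_qp.
case/andP=> i_notin_s uniq_s; rewrite /= mulop_proj_i !IH //.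
have prod_notin (x : two_copies n) :
    \prod_(k | k \notin s) id_qp (qpair x k) (qpair c k) =
    id_qp (qpair x i) (qpair c i) *
      \prod_(k | k \notin i :: s) id_qp (qpair x k) (qpair c k).
  by rewrite (bigD1 i) //=; congr (_ * _); apply: eq_bigl => k; rewrite inE negb_or andbC.
rewrite !prod_notin.
have -> : \prod_(k | k \notin i :: s) id_qp (qpair (swap_at i a) k) (qpair c k) =
          \prod_(k | k \notin i :: s) id_qp (qpair a k) (qpair c k).
  by apply: eq_bigr => k; rewrite inE negb_or qpair_swap_at => /andP[/negbTE ->].
have -> : \prod_(k <- s) proj_qp (z k) (qpair (swap_at i a) k) (qpair c k) =
          \prod_(k <- s) proj_qp (z k) (qpair a k) (qpair c k).
  apply: eq_big_seq => k k_in_s; rewrite qpair_swap_at; case: eqP => // eq_ki.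
  by move: i_notin_s; rewrite -eq_ki k_in_s.
have -> : id_qp (qpair (swap_at i a) i) (qpair c i) = swap_qp (qpair a i) (qpair c i).
  by rewrite qpair_swap_at eqxx /id_qp /swap_qp /qpair /= !xpair_eqE andbC.
rewrite big_cons /proj_qp; ring.
Qed.

Lemma Pz_entry (z : qubits n) a c :
  Pz C z a c = \prod_k proj_qp (z k) (qpair a k) (qpair c k).
Proof.
rewrite /Pz foldr_proj_i_entry ?enum_uniq // big_pred0 ?mul1r ?big_enum //.
by move=> k; rewrite mem_enum.
Qed.

Definition mixed_qp S Q (k : 'I_n) (x y : bool * bool) : C :=
  if k \in Q then proj_qp true x y else if k \in S then swap_qp x y else id_qp x y.

Definition mixed_op S Q : op C (two_copies n) :=
  fun a b => \prod_k mixed_qp S Q k (qpair a k) (qpair b k).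

Definition mixed_val psi S Q : C := trop (mulop (mixed_op S Q) (rho2 psi)).

Lemma mixed_opU1 S Q (i : 'I_n) a b : i \notin S -> i \notin Q ->
  mixed_op S (i |: Q) a b = (mixed_op S Q a b - mixed_op (i |: S) Q a b) / 2.
Proof.
move=> /negbTE i_notin_S /negbTE i_notin_Q.
have split_i S' Q' : mixed_op S' Q' a b = mixed_qp S' Q' i (qpair a i) (qpair b i) *
    \prod_(k | k != i) mixed_qp S' Q' k (qpair a k) (qpair b k).
  exact: bigD1.
have off_i S' Q' : \prod_(k | k != i) mixed_qp S' (i |: Q') k (qpair a k) (qpair b k)
    = \prod_(k | k != i) mixed_qp S' Q' k (qpair a k) (qpair b k) /\
  \prod_(k | k != i) mixed_qp (i |: S') Q' k (qpair a k) (qpair b k)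
    = \prod_(k | k != i) mixed_qp S' Q' k (qpair a k) (qpair b k).
  by split; apply: eq_bigr => k /negbTE k_neq_i; rewrite /mixed_qp !in_setU1 k_neq_i.
rewrite !split_i (off_i S Q).1 (off_i S Q).2 /mixed_qp !in_setU1 eqxx i_notin_S i_notin_Q /=.
rewrite /proj_qp expr1; ring.
Qed.

Lemma mixed_valU1 psi S Q (i : 'I_n) : i \notin S -> i \notin Q ->
  mixed_val psi S (i |: Q) = (mixed_val psi S Q - mixed_val psi (i |: S) Q) / 2.
Proof.
move=> i_notin_S i_notin_Q; rewrite /mixed_val /trop /mulop -sumrB mulr_suml.
apply: eq_bigr => a _; rewrite -sumrB mulr_suml; apply: eq_bigr => b _.
by rewrite mixed_opU1 //; ring.
Qed.

Definition moment psi Q : C :=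
  \sum_(z : qubits n) (\prod_(k in Q) ((z k)%:R : C)) * p_out psi z.

Lemma sum_weighted_Pz Q a b :
  \sum_(z : qubits n) (\prod_(k in Q) ((z k)%:R : C)) * Pz C z a b = mixed_op set0 Q a b.
Proof.
under eq_bigr => z _ do rewrite Pz_entry big_mkcond -big_split /=.
rewrite -(bigA_distr_bigA (fun k (s : bool) =>
  (if k \in Q then (s%:R : C) else 1) * proj_qp s (qpair a k) (qpair b k))).
apply: eq_bigr => k _; rewrite big_bool /mixed_qp in_set0.
by case: (k \in Q); rewrite /proj_qp ?expr0 ?expr1 /=; field.
Qed.

Lemma moment_mixed_val psi Q : moment psi Q = mixed_val psi set0 Q.
Proof.
rewrite /moment /mixed_val /p_out /trop /mulop.
under eq_bigr => z _ do rewrite mulr_sumr.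
rewrite exchange_big; apply: eq_bigr => a _.
under eq_bigr => z _ do rewrite mulr_sumr.
rewrite exchange_big; apply: eq_bigr => b _.
by rewrite -sum_weighted_Pz mulr_suml; apply: eq_bigr => z _; rewrite mulrA.
Qed.

Definition swap_set S b : two_copies n :=
  ([ffun j => if j \in S then b.2 j else b.1 j],
   [ffun j => if j \in S then b.1 j else b.2 j]).

Lemma mixed_op_set0 S a b : mixed_op S set0 a b = (a == swap_set S b)%:R.
Proof.
rewrite -prod_id_qp; apply: eq_bigr => k _.
by rewrite /mixed_qp in_set0 /qpair /swap_set /= !ffunE; case: (k \in S).
Qed.

Lemma mixed_val_swap psi S : mixed_val psi S set0 = \sum_b rho2 psi b (swap_set S b).
Proof.
rewrite /mixed_val /trop /mulop exchange_big; apply: eq_bigr => b _.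
rewrite -(sum_eq_natrM (swap_set S b) (rho2 psi b)).
by apply: eq_bigr => a _; rewrite mixed_op_set0 eq_sym.
Qed.

Local Notation cfg_in S := {ffun {i : 'I_n | i \in S} -> bool}.
Local Notation cfg_out S := {ffun {i : 'I_n | i \notin S} -> bool}.

(* tr (rho_S ^ 2), rho_S being Hermitian. *)
Definition purity psi S : C :=
  \sum_(x : cfg_in S) \sum_(y : cfg_in S) `|rdm psi x y| ^+ 2.

Section Glue.
Variable S : {set 'I_n}.
Implicit Types (x y : cfg_in S) (e f : cfg_out S).

Definition restr_in (q : qubits n) : cfg_in S := [ffun u => q (val u)].
Definition restr_out (q : qubits n) : cfg_out S := [ffun u => q (val u)].

Lemma glue_restr q : glue (restr_in q) (restr_out q) = q.
Proof.
apply/ffunP => j; rewrite /glue ffunE.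
case: insubP => [u _ <- | j_notin_S]; first by rewrite ffunE.
case: insubP => [u _ <- | /negPn j_in_S]; first by rewrite ffunE.
by rewrite j_in_S in j_notin_S.
Qed.

Lemma restr_in_glue x e : restr_in (glue x e) = x.
Proof.
apply/ffunP => u; rewrite !ffunE.
case: insubP => [u' _ val_u' | ]; first by congr (x _); apply: val_inj.
by rewrite (valP u).
Qed.

Lemma restr_out_glue x e : restr_out (glue x e) = e.
Proof.
apply/ffunP => u; rewrite !ffunE.
case: insubP => [u' j_in_S _ | _]; first by have := valP u; rewrite j_in_S.
case: insubP => [u' _ val_u' | ]; first by congr (e _); apply: val_inj.
by rewrite (valP u).
Qed.

Lemma glue_in x e f j : j \in S -> glue x e j = glue x f j.
Proof. by move=> j_in_S; rewrite !ffunE; case: insubP => // /negP. Qed.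

Lemma glue_out x y e j : j \notin S -> glue x e j = glue y e j.
Proof. by move=> /negP j_notin_S; rewrite !ffunE; case: insubP. Qed.

Lemma sum_glue (F : qubits n -> C) :
  \sum_(q : qubits n) F q = \sum_(x : cfg_in S) \sum_(e : cfg_out S) F (glue x e).
Proof.
rewrite pair_bigA (reindex (fun p : cfg_in S * cfg_out S => glue p.1 p.2)) //.
apply: onW_bij; exists (fun q => (restr_in q, restr_out q)) => [[x e]|q] /=.
  by rewrite restr_in_glue restr_out_glue.
exact: glue_restr.
Qed.

Lemma swap_set_glue x y e f : swap_set S (glue x e, glue y f) = (glue y e, glue x f).
Proof.
congr pair; apply/ffunP => j; rewrite ffunE /=.
all: by case: ifP => j_in_S; [apply: glue_in | apply: glue_out; rewrite j_in_S].
Qed.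

End Glue.

Lemma mixed_val_purity psi S : mixed_val psi S set0 = purity psi S.
Proof.
rewrite mixed_val_swap.
transitivity (\sum_(q : qubits n) \sum_(q' : qubits n) rho2 psi (q, q') (swap_set S (q, q'))).
  by rewrite pair_bigA; apply: eq_bigr => -[].
rewrite (sum_glue S); apply: eq_bigr => x _.
under eq_bigr => e _ do rewrite (sum_glue S).
rewrite exchange_big; apply: eq_bigr => y _.
rewrite normCK /rdm rmorph_sum mulr_suml; apply: eq_bigr => e _.
rewrite mulr_sumr; apply: eq_bigr => f _.
by rewrite swap_set_glue /rho2 /= !rmorphM /= conjCK; ring.
Qed.

Lemma rdm_diag psi S (x : cfg_in S) : rdm psi x x = \sum_e `|psi (glue x e)| ^+ 2.
Proof. by apply: eq_bigr => e _; rewrite normCK. Qed.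

Lemma rdm_trace psi S : is_state psi -> \sum_(x : cfg_in S) rdm psi x x = 1.
Proof. by move=> <-; rewrite (sum_glue S); apply: eq_bigr => x _; rewrite rdm_diag. Qed.

Lemma card_cfg_in S : #|cfg_in S|%:R = 2 ^+ #|S| :> C.
Proof. by rewrite card_ffun card_bool card_sig natrX. Qed.

Lemma purity_ge psi S : is_state psi -> (2 ^+ #|S|)^-1 <= purity psi S.
Proof.
move=> psi_state; have rdm_diag_ge0 (x : cfg_in S) : 0 <= rdm psi x x.
  by rewrite rdm_diag; apply: sumr_ge0 => e _; apply: exprn_ge0.
rewrite -card_cfg_in; apply: le_trans (sum_sqr_ge_inv_card _ (rdm_trace S psi_state)) _.
  by move=> x; apply: ger0_real.
apply: ler_sum => x _.
by rewrite (bigD1 x) //= ger0_norm // lerDl; apply: sumr_ge0 => y _; apply: exprn_ge0.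
Qed.

Lemma purity_uniform psi S k :
  k_uniform psi k -> (#|S| <= k)%N -> purity psi S = (2 ^+ #|S|)^-1.
Proof.
move=> psi_unif S_le_k; have two_gt0 : 0 < (2 : C) ^+ #|S| by rewrite exprn_gt0.
rewrite /purity (eq_bigr (fun _ => (2 ^+ #|S|)^-2)); last first.
  move=> x _; rewrite (bigD1 x) //= psi_unif // eqxx big1 ?addr0.
    by rewrite mul1r ger0_norm ?invr_ge0 ?ltW // exprVn.
  by move=> y neq_yx; rewrite psi_unif // eq_sym (negbTE neq_yx) mul0r normr0 expr0n.
rewrite sumr_const -(mulr_natl _ #|_|) -[#|_|]/#|cfg_in S| card_cfg_in.
by rewrite expr2 invfM mulrA mulfV ?mul1r // gt_eqF.
Qed.

Lemma state_uniform0 psi : is_state psi -> k_uniform psi 0.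
Proof.
move=> psi_state A; rewrite leqn0 => /eqP card_A0 x y.
have /fintype_le1P all_eq : (#|cfg_in A| <= 1)%N.
  by rewrite card_ffun card_bool card_sig card_A0.
rewrite card_A0 expr0 divr1 (all_eq x y) eqxx mulr1n -(rdm_trace A psi_state).
rewrite (bigD1 x) //= big1 ?addr0 // => z.
by rewrite (all_eq x z) eqxx.
Qed.

Lemma purity_set0 psi : is_state psi -> purity psi set0 = 1.
Proof.
by move=> psi_state; rewrite (purity_uniform (state_uniform0 psi_state)) cards0 ?expr0 ?invr1.
Qed.

Lemma moment1 psi (i : 'I_n) :
  moment psi [set i] = (purity psi set0 - purity psi [set i]) / 2.
Proof.
by rewrite moment_mixed_val -[[set i]]setU0 mixed_valU1 ?in_set0 // setU0 !mixed_val_purity.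
Qed.

Lemma moment2 psi (i j : 'I_n) : i != j -> moment psi [set i; j] =
  (purity psi set0 - purity psi [set i] - purity psi [set j] + purity psi [set i; j]) / 4.
Proof.
move=> neq_ij; have i_notin_j : i \notin [set j] by rewrite in_set1.
have j_notin_i : j \notin [set i] by rewrite in_set1 eq_sym.
rewrite moment_mixed_val mixed_valU1 ?in_set0 // setU0 -[[set j] in LHS]setU0.
rewrite !mixed_valU1 ?in_set0 // !setU0 [j |: _]setUC !mixed_val_purity.
by field.
Qed.

Lemma hweightE (z : qubits n) : (hweight z)%:R = \sum_i (z i)%:R :> C.
Proof.
rewrite /hweight -sum1_card big_mkcond natr_sum; apply: eq_bigr => i _.
by rewrite inE; case: (z i).
Qed.

Lemma Bell_exp_moment psi : Bell_exp psi = \sum_i moment psi [set i].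
Proof.
rewrite /Bell_exp /moment exchange_big; apply: eq_bigr => z _.
by rewrite hweightE mulr_suml; apply: eq_bigr => i _; rewrite big_set1.
Qed.

Lemma Bell_sq_moment psi : \sum_z (hweight z)%:R ^+ 2 * p_out psi z =
  \sum_i \sum_j moment psi [set i; j].
Proof.
rewrite /moment; under [RHS]eq_bigr => i _ do rewrite exchange_big.
rewrite exchange_big; apply: eq_bigr => z _.
rewrite hweightE expr2 mulr_suml mulr_suml; apply: eq_bigr => i _.
rewrite -mulrA mulr_suml mulr_sumr; apply: eq_bigr => j _; rewrite mulrA.
have [<-|neq_ij] := eqVneq i j; last by rewrite big_setU1 ?big_set1 ?in_set1.
by rewrite setUid big_set1; case: (z i); rewrite ?mul1r ?mul0r.
Qed.

Lemma moment1_le psi (i : 'I_n) : is_state psi -> moment psi [set i] <= 4^-1.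
Proof.
move=> psi_state; have := purity_ge [set i] psi_state.
rewrite moment1 purity_set0 // cards1 expr1 -subr_ge0 => half_le.
rewrite -subr_ge0 (_ : _ - _ = (purity psi [set i] - 2^-1) / 2); last by field.
by rewrite divr_ge0.
Qed.

Lemma moment1_uniform psi (i : 'I_n) :
  is_state psi -> k_uniform psi 1 -> moment psi [set i] = 4^-1.
Proof.
move=> psi_state psi_unif.
by rewrite moment1 purity_set0 // (purity_uniform psi_unif) cards1 // expr1; field.
Qed.

Lemma n_div4_sum : n%:R / 4 = \sum_(i < n) 4^-1 :> C.
Proof. by rewrite sumr_const card_ord mulr_natl. Qed.

Lemma Bell_exp_le psi : is_state psi -> Bell_exp psi <= n%:R / 4.
Proof.
move=> psi_state; rewrite Bell_exp_moment n_div4_sum.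
by apply: ler_sum => i _; apply: moment1_le.
Qed.

Lemma Bell_exp_uniform psi : is_state psi -> k_uniform psi 1 -> Bell_exp psi = n%:R / 4.
Proof.
move=> psi_state psi_unif; rewrite Bell_exp_moment n_div4_sum.
by apply: eq_bigr => i _; apply: moment1_uniform.
Qed.

Lemma moment1_of_Bell_exp psi (i : 'I_n) :
  is_state psi -> Bell_exp psi = n%:R / 4 -> moment psi [set i] = 4^-1.
Proof.
move=> psi_state; rewrite Bell_exp_moment n_div4_sum => /eqP.
rewrite eq_sym -subr_eq0 -sumrB => /eqP/psumr_eq0P gap0.
apply/eqP; rewrite eq_sym -subr_eq0 gap0 // => k _.
by rewrite subr_ge0; apply: moment1_le.
Qed.

Lemma k_uniform_le psi k l : (l <= k)%N -> k_uniform psi k -> k_uniform psi l.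
Proof. by move=> l_le_k psi_unif A card_A; apply: psi_unif; apply: leq_trans l_le_k. Qed.

Lemma moment_pair_le phi psi (i j : 'I_n) :
  is_state phi -> k_uniform phi 2 -> is_state psi ->
  (forall k, moment psi [set k] = 4^-1) ->
  moment phi [set i; j] <= moment psi [set i; j].
Proof.
move=> phi_state phi_unif psi_state psi_moment1.
have [<-|neq_ij] := eqVneq i j.
  rewrite setUid psi_moment1 moment1_uniform //; exact: k_uniform_le phi_unif.
have psi_purity1 k : purity psi [set k] = 2^-1.
  have := psi_moment1 k; rewrite moment1 purity_set0 // => moment1_k.
  have -> : purity psi [set k] = 1 - 2 * ((1 - purity psi [set k]) / 2) by field.
  by rewrite moment1_k; field.
rewrite !moment2 // !purity_set0 // !psi_purity1.
rewrite !(purity_uniform phi_unif) ?cards1 ?cards2 ?neq_ij //.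
rewrite ler_pM2r ?invr_gt0 ?ltr0n // lerD2l.
by have := purity_ge [set i; j] psi_state; rewrite cards2 neq_ij.
Qed.

End TwoCopies.

Theorem corollary3 (C : numClosedFieldType) (n : nat) :
  (forall psi : ket C n, is_state psi -> Bell_exp psi <= n%:R / 4) /\
  (forall psi : ket C n, is_state psi -> k_uniform psi 1 ->
     Bell_exp psi = n%:R / 4) /\
  (forall phi : ket C n, is_state phi -> k_uniform phi 2 ->
     Bell_exp phi = n%:R / 4 /\
     (forall psi : ket C n, is_state psi -> Bell_exp psi = n%:R / 4 ->
        Bell_var phi <= Bell_var psi)).
Proof.
split; first exact: Bell_exp_le.
split; first exact: Bell_exp_uniform.
move=> phi phi_state phi_unif.
have phi_Bell : Bell_exp phi = n%:R / 4.
  exact/Bell_exp_uniform/(k_uniform_le _ phi_unif).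
split=> // psi psi_state psi_Bell.
rewrite /Bell_var !Bell_sq_moment phi_Bell psi_Bell lerD2r.
apply: ler_sum => i _; apply: ler_sum => j _; apply: moment_pair_le => // k.
exact: moment1_of_Bell_exp.
Qed.
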